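(* Let $\mathbb{C}$ be a pointed category with finite products that has normal projections. Then $\mathbb{C}$ has a subtractive theory of abelian objects, i.e., the following hold: (A1) for any objects $X,X'$ equipped with subtractions $s\colon X\times X\to X$ and $s'\colon X'\times X'\to X'$, every morphism $g\colon X\to X'$ is homomorphic with respect to them, i.e., $g\circ s=s'\circ(g\times g)$; (A2) on any object $X$ there is at most one subtraction, and if $s$ is a subtraction on $X$ then $s$ is the subtraction $s(x,y)=x-y$ of an internal abelian group structure on $X$; (A3) if $X,X'$ are underlying objects of internal abelian groups in $\mathbb{C}$, then every morphism $X\to X'$ is a homomorphism of these internal abelian groups.
   Context: A pointed category $\mathbb{C}$ with finite products has normal projections if for all objects $X,Y$ the product projection $\pi_2\colon X\times Y\to Y$ is a cokernel of the morphism $(1_X,0)\colon X\to X\times Y$. Using generalised elements, a morphism $s\colon X\times X\to X$ is a subtraction on $X$ if $s\circ(1_X,1_X)=0$ and $s\circ(1_X,0)=1_X$ (i.e., $s(x,x)=0$ and $s(x,0)=x$). A morphism $g\colon X\to X'$ is homomorphic with respect to subtractions $s$ on $X$ and $s'$ on $X'$ if $g(s(x,y))=s'(g(x),g(y))$, i.e., $g\circ s=s'\circ(g\times g)$. An internal abelian group in $\mathbb{C}$ is an object with morphisms for addition, zero and negation satisfying the abelian group axioms internally. *)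

Set Implicit Arguments.
Unset Strict Implicit.

Record Cat := {
  Ob :> Type;
  Hom : Ob -> Ob -> Type;
  comp : forall {A B C : Ob}, Hom B C -> Hom A B -> Hom A C;
  idm : forall A : Ob, Hom A A;
  comp_assoc : forall (A B C D : Ob) (h : Hom C D) (g : Hom B C) (f : Hom A B),
      comp h (comp g f) = comp (comp h g) f;
  comp_id_l : forall (A B : Ob) (f : Hom A B), comp (idm B) f = f;
  comp_id_r : forall (A B : Ob) (f : Hom A B), comp f (idm A) = f
}.

Arguments Hom {c} _ _.
Arguments comp {c A B C} _ _.
Arguments idm {c} A.

(** The zero object [zo] is both initial and terminal, hence serves as the
    terminal object (empty product); binary products are given with their
    universal property. *)
Record PointedFP (C : Cat) := {
  zo : Ob C;
  zin : forall X : Ob C, Hom zo X;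
  zin_uniq : forall (X : Ob C) (f : Hom zo X), f = zin X;
  zout : forall X : Ob C, Hom X zo;
  zout_uniq : forall (X : Ob C) (f : Hom X zo), f = zout X;
  prod : Ob C -> Ob C -> Ob C;
  p1 : forall X Y : Ob C, Hom (prod X Y) X;
  p2 : forall X Y : Ob C, Hom (prod X Y) Y;
  pair : forall (T X Y : Ob C), Hom T X -> Hom T Y -> Hom T (prod X Y);
  pair_p1 : forall (T X Y : Ob C) (f : Hom T X) (g : Hom T Y),
      comp (p1 X Y) (pair f g) = f;
  pair_p2 : forall (T X Y : Ob C) (f : Hom T X) (g : Hom T Y),
      comp (p2 X Y) (pair f g) = g;
  pair_uniq : forall (T X Y : Ob C) (h : Hom T (prod X Y)),
      pair (comp (p1 X Y) h) (comp (p2 X Y) h) = h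
}.

Arguments zo {C} _.
Arguments zin {C} _ _.
Arguments zout {C} _ _.
Arguments prod {C} _ _ _.
Arguments p1 {C} _ _ _.
Arguments p2 {C} _ _ _.
Arguments pair {C} _ {T X Y} _ _.

Section Notions.
Context {C : Cat} (P : PointedFP C).

Definition zmor (X Y : Ob C) : Hom X Y := comp (zin P Y) (zout P X).

Definition prodmap {X Y X' Y' : Ob C} (f : Hom X X') (g : Hom Y Y')
  : Hom (prod P X Y) (prod P X' Y') :=
  pair P (comp f (p1 P X Y)) (comp g (p2 P X Y)).

Definition is_cokernel {K A Q : Ob C} (f : Hom K A) (q : Hom A Q) : Prop :=
  comp q f = zmor K Q /\
  forall (B : Ob C) (h : Hom A B), comp h f = zmor K B ->
    exists u : Hom Q B, comp u q = h /\
      forall u' : Hom Q B, comp u' q = h -> u' = u.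

Definition has_normal_projections : Prop :=
  forall X Y : Ob C,
    is_cokernel (pair P (idm X) (zmor X Y)) (p2 P X Y).

Definition is_subtraction {X : Ob C} (s : Hom (prod P X X) X) : Prop :=
  comp s (pair P (idm X) (idm X)) = zmor X X /\
  comp s (pair P (idm X) (zmor X X)) = idm X.

Definition homomorphic_sub {X X' : Ob C} (s : Hom (prod P X X) X)
  (s' : Hom (prod P X' X') X') (g : Hom X X') : Prop :=
  comp g s = comp s' (prodmap g g).

(** Internal abelian group on X: addition, zero (a point 1 -> X, the terminal
    object being the zero object), negation, with the abelian group axioms. *)
Record IAbGroup (X : Ob C) := {
  iadd : Hom (prod P X X) X;
  izero : Hom (zo P) X;
  ineg : Hom X X;
  iadd_assoc :
    let a := p1 P X (prod P X X) in
    let b := comp (p1 P X X) (p2 P X (prod P X X)) in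
    let c := comp (p2 P X X) (p2 P X (prod P X X)) in
    comp iadd (pair P (comp iadd (pair P a b)) c)
    = comp iadd (pair P a (comp iadd (pair P b c)));
  iadd_0r : comp iadd (pair P (idm X) (comp izero (zout P X))) = idm X;
  iadd_0l : comp iadd (pair P (comp izero (zout P X)) (idm X)) = idm X;
  iadd_negr : comp iadd (pair P (idm X) ineg) = comp izero (zout P X);
  iadd_negl : comp iadd (pair P ineg (idm X)) = comp izero (zout P X);
  iadd_comm : comp iadd (pair P (p2 P X X) (p1 P X X)) = iadd
}.

Definition isub {X : Ob C} (G : IAbGroup X) : Hom (prod P X X) X :=
  comp (iadd G) (pair P (p1 P X X) (comp (ineg G) (p2 P X X))).

Definition iab_hom {X X' : Ob C} (G : IAbGroup X) (G' : IAbGroup X')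
  (g : Hom X X') : Prop :=
  comp g (iadd G) = comp (iadd G') (prodmap g g).

Definition A1 : Prop :=
  forall (X X' : Ob C) (s : Hom (prod P X X) X) (s' : Hom (prod P X' X') X'),
    is_subtraction s -> is_subtraction s' ->
    forall g : Hom X X', homomorphic_sub s s' g.

Definition A2 : Prop :=
  forall X : Ob C,
    (forall s t : Hom (prod P X X) X, is_subtraction s -> is_subtraction t -> s = t) /\
    (forall s : Hom (prod P X X) X, is_subtraction s ->
       exists G : IAbGroup X, s = isub G).

Definition A3 : Prop :=
  forall (X X' : Ob C) (G : IAbGroup X) (G' : IAbGroup X') (g : Hom X X'),
    iab_hom G G' g.

Definition subtractive_theory_of_abelian_objects : Prop := A1 /\ A2 /\ A3.

End Notions.

(** Normal projections say that a morphism [h : X * Y -> Z] with [h (x, 0) = 0]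
    factors through the second projection, i.e. [h (x, y) = h (0, y)].  For a
    subtraction [s] this gives [s (a, s (a, b)) = s (b, s (b, b)) = b], hence
    [s (a, b) = 0] forces [a = b].  Consequently two morphisms [F G : X * Y -> Z]
    into an object carrying a subtraction agree as soon as they agree on
    [(x, 0)] and on [(c y, y)] for some [c]: their difference vanishes on
    [(x, 0)], so it equals its value at [(c y, y)], which is [0].  Taking
    [c = 1] or [c = 0] shows that subtractions and abelian group operations are
    determined by their values on the axes and the diagonal, which yields
    homomorphicity and uniqueness; [x + y := s (x, s (0, y))] is the abelian
    group whose subtraction is [s]. *)
Set Implicit Arguments.
Unset Strict Implicit.

Section ProductCalculus.
Context {C : Cat} (P : PointedFP C).

Lemma comp_pair (S T X Y : Ob C) (f : Hom T X) (g : Hom T Y) (h : Hom S T) :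
  comp (pair P f g) h = pair P (comp f h) (comp g h).
Proof.
  rewrite <- (pair_uniq (comp (pair P f g) h)).
  rewrite !comp_assoc, pair_p1, pair_p2. reflexivity.
Qed.

Lemma p1_pair_comp (S T X Y : Ob C) (f : Hom T X) (g : Hom T Y) (h : Hom S T) :
  comp (p1 P X Y) (comp (pair P f g) h) = comp f h.
Proof. rewrite comp_assoc, pair_p1. reflexivity. Qed.

Lemma p2_pair_comp (S T X Y : Ob C) (f : Hom T X) (g : Hom T Y) (h : Hom S T) :
  comp (p2 P X Y) (comp (pair P f g) h) = comp g h.
Proof. rewrite comp_assoc, pair_p2. reflexivity. Qed.

Lemma pair_p1_p2 (X Y : Ob C) : pair P (p1 P X Y) (p2 P X Y) = idm (prod P X Y).
Proof.
  rewrite <- (pair_uniq (idm (prod P X Y))), !comp_id_r. reflexivity.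
Qed.

Lemma zmor_comp (X Y Z : Ob C) (h : Hom X Y) : comp (zmor P Y Z) h = zmor P X Z.
Proof.
  unfold zmor. rewrite <- comp_assoc, (zout_uniq (comp (zout P Y) h)).
  reflexivity.
Qed.

Lemma comp_zmor (X Y Z : Ob C) (h : Hom Y Z) : comp h (zmor P X Y) = zmor P X Z.
Proof.
  unfold zmor. rewrite comp_assoc, (zin_uniq (comp h (zin P Y))).
  reflexivity.
Qed.

Lemma prodmap_pair (T X Y X' Y' : Ob C) (f : Hom X X') (g : Hom Y Y')
  (a : Hom T X) (b : Hom T Y) :
  comp (prodmap P f g) (pair P a b) = pair P (comp f a) (comp g b).
Proof.
  unfold prodmap. rewrite comp_pair, <- !comp_assoc, pair_p1, pair_p2.
  reflexivity.
Qed.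

End ProductCalculus.

Hint Rewrite <- comp_assoc : prodcat.
Hint Rewrite comp_id_l comp_id_r pair_p1 pair_p2 @comp_pair @p1_pair_comp
  @p2_pair_comp @pair_p1_p2 @zmor_comp @comp_zmor @prodmap_pair : prodcat.

Ltac prodcat := autorewrite with prodcat; try reflexivity.

Section Subtraction.
Context {C : Cat} (P : PointedFP C) {X : Ob C} (s : Hom (prod P X X) X).
Hypothesis s_sub : is_subtraction s.

Lemma sub_diag (T : Ob C) (a : Hom T X) : comp s (pair P a a) = zmor P T X.
Proof.
  transitivity (comp (comp s (pair P (idm X) (idm X))) a); [prodcat |].
  rewrite (proj1 s_sub). prodcat.
Qed.

Lemma sub_zmor (T : Ob C) (a : Hom T X) : comp s (pair P a (zmor P T X)) = a.
Proof.
  transitivity (comp (comp s (pair P (idm X) (zmor P X X))) a); [prodcat |].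
  rewrite (proj2 s_sub). prodcat.
Qed.

End Subtraction.

Section NormalProjections.
Context {C : Cat} (P : PointedFP C).
Hypothesis normal_proj : has_normal_projections P.

Lemma pair_fst_irrelevant (X Y Z : Ob C) (h : Hom (prod P X Y) Z) :
  comp h (pair P (idm X) (zmor P X Y)) = zmor P X Z ->
  forall (T : Ob C) (a : Hom T X) (b : Hom T Y),
    comp h (pair P a b) = comp h (pair P (zmor P T X) b).
Proof.
  intros h_fst T a b.
  destruct (proj2 (normal_proj X Y) Z h h_fst) as [u [u_fact _]].
  rewrite <- u_fact. prodcat.
Qed.

Section OnSubtraction.
Context {X : Ob C} (s : Hom (prod P X X) X).
Hypothesis s_sub : is_subtraction s.

Lemma sub_sub_cancel_l (T : Ob C) (a b : Hom T X) :
  comp s (pair P a (comp s (pair P a b))) = b.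
Proof.
  set (F := comp s (pair P (p1 P X X) (comp s (pair P (p1 P X X) (p2 P X X))))).
  assert (F_fst : comp F (pair P (idm X) (zmor P X X)) = zmor P X X).
  { unfold F. prodcat. rewrite (sub_zmor s_sub), (sub_diag s_sub). reflexivity. }
  assert (F_ab : comp F (pair P a b) = comp F (pair P b b)).
  { rewrite (pair_fst_irrelevant F_fst a b), (pair_fst_irrelevant F_fst b b).
    reflexivity. }
  unfold F in F_ab. autorewrite with prodcat in F_ab. rewrite F_ab.
  rewrite (sub_diag s_sub), (sub_zmor s_sub). reflexivity.
Qed.

Lemma sub_eq_zmor (T : Ob C) (a b : Hom T X) :
  comp s (pair P a b) = zmor P T X -> a = b.
Proof.
  intro ab_zero.
  rewrite <- (sub_sub_cancel_l a b), ab_zero, (sub_zmor s_sub). reflexivity.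
Qed.

End OnSubtraction.

Lemma prod_hom_ext (X Y Z : Ob C) (t : Hom (prod P Z Z) Z) (c : Hom Y X)
  (F G : Hom (prod P X Y) Z) :
  is_subtraction t ->
  comp F (pair P (idm X) (zmor P X Y)) = comp G (pair P (idm X) (zmor P X Y)) ->
  comp F (pair P c (idm Y)) = comp G (pair P c (idm Y)) ->
  F = G.
Proof.
  intros t_sub FG_fst FG_c.
  apply (sub_eq_zmor t_sub).
  set (d := comp t (pair P F G)).
  assert (d_fst : comp d (pair P (idm X) (zmor P X Y)) = zmor P X Z).
  { unfold d. prodcat. rewrite FG_fst. apply (sub_diag t_sub). }
  assert (d_c : comp d (pair P c (idm Y)) = zmor P Y Z).
  { unfold d. prodcat. rewrite FG_c. apply (sub_diag t_sub). }
  transitivity (comp d (pair P (p1 P X Y) (p2 P X Y))); [prodcat |].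
  rewrite (pair_fst_irrelevant d_fst),
    <- (pair_fst_irrelevant d_fst (comp c (p2 P X Y))).
  transitivity (comp (comp d (pair P c (idm Y))) (p2 P X Y)); [prodcat |].
  rewrite d_c. prodcat.
Qed.

Lemma subtraction_homomorphic : A1 P.
Proof.
  intros X X' s s' s_sub s'_sub g. unfold homomorphic_sub.
  apply (prod_hom_ext (c := idm X) s'_sub); autorewrite with prodcat.
  - rewrite (sub_zmor s_sub), (sub_zmor s'_sub). prodcat.
  - rewrite (sub_diag s_sub), (sub_diag s'_sub). prodcat.
Qed.

Lemma subtraction_unique (X : Ob C) (s t : Hom (prod P X X) X) :
  is_subtraction s -> is_subtraction t -> s = t.
Proof.
  intros s_sub t_sub.
  apply (prod_hom_ext (c := idm X) t_sub).
  - rewrite (proj2 s_sub), (proj2 t_sub). reflexivity.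
  - rewrite (proj1 s_sub), (proj1 t_sub). reflexivity.
Qed.

Section GroupOfSubtraction.
Context {X : Ob C} (s : Hom (prod P X X) X).
Hypothesis s_sub : is_subtraction s.

Definition sub_neg : Hom X X := comp s (pair P (zmor P X X) (idm X)).

Definition sub_add : Hom (prod P X X) X :=
  comp s (pair P (p1 P X X) (comp sub_neg (p2 P X X))).

Hint Rewrite (sub_diag s_sub) (sub_zmor s_sub)
  (sub_sub_cancel_l s_sub) : subgroup.

Ltac subgroup :=
  unfold sub_add, sub_neg; autorewrite with prodcat subgroup; try reflexivity.

Definition sub_group : IAbGroup P X.
Proof.
  refine (@Build_IAbGroup C P X sub_add (zin P X) sub_neg _ _ _ _ _ _).
  - cbv zeta. apply (prod_hom_ext (c := zmor P (prod P X X) X) s_sub); subgroup.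
  - subgroup.
  - subgroup.
  - subgroup.
  - subgroup.
  - apply (prod_hom_ext (c := zmor P X X) s_sub); subgroup.
Defined.

Lemma isub_sub_group : isub sub_group = s.
Proof. unfold isub. cbn. subgroup. Qed.

End GroupOfSubtraction.

Lemma subtraction_of_abelian_group : A2 P.
Proof.
  intro X. split.
  - exact (@subtraction_unique X).
  - intros s s_sub. exists (sub_group s_sub). symmetry. exact (isub_sub_group s_sub).
Qed.

Section InternalAbelianGroup.
Context {X : Ob C} (G : IAbGroup P X).

Lemma izero_zout : comp (izero G) (zout P X) = zmor P X X.
Proof. rewrite (zin_uniq (izero G)). reflexivity. Qed.

Lemma isub_is_subtraction : is_subtraction (isub G).
Proof.
  pose proof (iadd_0r G) as add_0r. pose proof (iadd_negr G) as add_negr.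
  rewrite izero_zout in add_0r, add_negr.
  unfold isub. split; prodcat; assumption.
Qed.

Lemma iadd_zmor_r (T : Ob C) (a : Hom T X) :
  comp (iadd G) (pair P a (zmor P T X)) = a.
Proof.
  transitivity (comp (comp (iadd G) (pair P (idm X) (comp (izero G) (zout P X)))) a).
  - rewrite izero_zout. prodcat.
  - rewrite (iadd_0r G). prodcat.
Qed.

Lemma iadd_zmor_l (T : Ob C) (a : Hom T X) :
  comp (iadd G) (pair P (zmor P T X) a) = a.
Proof.
  transitivity (comp (comp (iadd G) (pair P (comp (izero G) (zout P X)) (idm X))) a).
  - rewrite izero_zout. prodcat.
  - rewrite (iadd_0l G). prodcat.
Qed.

End InternalAbelianGroup.

Lemma internal_abelian_hom : A3 P.
Proof.
  intros X X' G G' g. unfold iab_hom.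
  apply (prod_hom_ext (c := zmor P X X) (isub_is_subtraction G'));
    autorewrite with prodcat.
  - rewrite !iadd_zmor_r. prodcat.
  - rewrite !iadd_zmor_l. prodcat.
Qed.

End NormalProjections.

Theorem theorem2p1 (C : Cat) (P : PointedFP C) :
  has_normal_projections P -> subtractive_theory_of_abelian_objects P.
Proof.
  intro normal_proj.
  split; [| split].
  - exact (subtraction_homomorphic normal_proj).
  - exact (subtraction_of_abelian_group normal_proj).
  - exact (internal_abelian_hom normal_proj).
Qed.
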